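(* Let $X=\{a_1,\dots,a_\ell\}$ be a finite set of $\ell$ distinct points, $N\ge2$, $\lambda_*\in\mathcal{P}(X)$, and let $\gamma$ be a probability measure on $X^N$. The following are equivalent: (i) $\gamma=\sum_{\nu=1}^\ell\alpha^{(\nu)}S(\delta_{T_1(a_\nu)}\otimes\cdots\otimes\delta_{T_N(a_\nu)})$ for some maps $T_1,\dots,T_N:X\to X$ and some $\alpha^{(1)},\dots,\alpha^{(\ell)}\ge0$ satisfying $\sum_{\nu=1}^\ell\lambda^{(\nu)}_i\alpha^{(\nu)}=(\lambda_* )_i$ for $i=1,\dots,\ell$, where $\lambda^{(\nu)}=\frac1N\sum_{k=1}^N\delta_{T_k(a_\nu)}$, i.e. $\lambda^{(\nu)}_i=\frac1N\#\{k:T_k(a_\nu)=a_i\}$; (ii) $\gamma=\sum_{\nu=1}^\ell\alpha^{(\nu)}\psi_N(\lambda^{(\nu)})$ for some $\lambda^{(1)},\dots,\lambda^{(\ell)}\in\mathcal{P}_{\frac1N}(X)$ and some $\alpha^{(1)},\dots,\alpha^{(\ell)}\ge0$ satisfying $\sum_{\nu=1}^\ell\lambda^{(\nu)}_i\alpha^{(\nu)}=(\lambda_* )_i$ for $i=1,\dots,\ell$. Moreover, if $\gamma$ is of form (i), then it is of form (ii) with the same $\lambda^{(\nu)}$ and $\alpha^{(\nu)}$; in particular $\gamma$ depends on $T_1,\dots,T_N$ only through the $\lambda^{(\nu)}$. Conversely, if $\gamma$ is of form (ii), then it is of form (i) with the same $\lambda^{(\nu)}$ and $\alpha^{(\nu)}$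 and with $T_1,\dots,T_N$ any maps $X\to X$ satisfying $\lambda^{(\nu)}=\frac1N\sum_{k=1}^N\delta_{T_k(a_\nu)}$ for all $\nu$.
   Context: $\mathcal{P}(X)$ denotes probability measures on $X$, identified with vectors $(\lambda_i)$, $\lambda_i=\lambda(\{a_i\})$; $\mathcal{P}_{\frac1N}(X)=\{\lambda\in\mathcal{P}(X):\lambda_i\in\frac1N\mathbb{Z}\ \forall i\}$. The symmetrization operator is $(S\gamma)(A_1\times\cdots\times A_N)=\frac1{N!}\sum_{\sigma\in S_N}\gamma(A_{\sigma(1)}\times\cdots\times A_{\sigma(N)})$. For $\lambda\in\mathcal{P}_{\frac1N}(X)$, $\psi_N(\lambda)=S(\delta_{a_{i_1}}\otimes\cdots\otimes\delta_{a_{i_N}})$ where $i_1\le\dots\le i_N$ is the nondecreasing index sequence in which each $i$ appears exactly $N\lambda_i$ times. *)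

From HB Require Import structures.
From mathcomp Require Import all_boot all_order all_fingroup all_algebra.
From mathcomp Require Import reals.
Set Implicit Arguments. Unset Strict Implicit. Unset Printing Implicit Defensive.
Import Order.TTheory GRing.Theory Num.Theory.
Local Open Scope ring_scope.

(* X = {a_1,...,a_l} is modelled by the index type 'I_l (a_i <-> i).
   A point of X^N is a finite function 'I_N -> 'I_l.
   Measures on the finite sets X and X^N are identified with their
   point-mass vectors (functions to R). *)

Definition config (N l : nat) := {ffun 'I_N -> 'I_l}.

Definition is_prob {R : realType} (T : finType) (mu : T -> R) : Prop :=
  (forall x, 0 <= mu x) /\ \sum_(x : T) mu x = 1.

Definition in_P1N {R : realType} (N l : nat) (lam : 'I_l -> R) : Prop :=
  is_prob lam /\ forall i, exists m : nat, lam i = m%:R / N%:R.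

(* delta_{a_{s_1}} (x) ... (x) delta_{a_{s_N}} as point masses on X^N *)
Definition dirac_seq {R : realType} (N l : nat) (s : seq 'I_l)
  (y : config N l) : R :=
  ([seq y k | k <- enum 'I_N] == s)%:R.

(* symmetrization operator S, evaluated on singletons
   {y} = {y_1} x ... x {y_N}: (S g)(y) = 1/N! sum_sigma g(y_{sigma(1)},...,y_{sigma(N)}) *)
Definition symm {R : realType} (N l : nat) (g : config N l -> R)
  (y : config N l) : R :=
  ((N`!)%:R)^-1 * \sum_(s : 'S_N) g [ffun k => y (s k)].

(* the nondecreasing index sequence in which each i appears N*lam_i times *)
Definition psi_seq {R : realType} (N l : nat) (lam : 'I_l -> R) : seq 'I_l :=
  flatten [seq nseq (Num.truncn (N%:R * lam i)) i | i <- enum 'I_l].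

Definition psiN {R : realType} (N l : nat) (lam : 'I_l -> R) : config N l -> R :=
  symm (dirac_seq (psi_seq N lam)).

Definition empirical {R : realType} (N l : nat) (T : 'I_N -> 'I_l -> 'I_l)
  (nu : 'I_l) (i : 'I_l) : R :=
  (N%:R)^-1 * #|[set k : 'I_N | T k nu == i]|%:R.

Definition mass_constraint {R : realType} (l : nat)
  (lams : 'I_l -> 'I_l -> R) (alpha : 'I_l -> R) (lamstar : 'I_l -> R) : Prop :=
  (forall nu, 0 <= alpha nu) /\
  forall i, \sum_(nu < l) lams nu i * alpha nu = lamstar i.

Definition formI {R : realType} (N l : nat) (T : 'I_N -> 'I_l -> 'I_l)
  (alpha : 'I_l -> R) : config N l -> R :=
  fun y => \sum_(nu < l) alpha nu * symm (dirac_seq [seq T k nu | k <- enum 'I_N]) y.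

Definition formII {R : realType} (N l : nat) (lams : 'I_l -> 'I_l -> R)
  (alpha : 'I_l -> R) : config N l -> R :=
  fun y => \sum_(nu < l) alpha nu * psiN (lams nu) y.

From HB Require Import structures.
From mathcomp Require Import all_boot all_order all_fingroup all_algebra.
From mathcomp Require Import reals.
Set Implicit Arguments. Unset Strict Implicit. Unset Printing Implicit Defensive.
Import Order.TTheory GRing.Theory Num.Theory.
Local Open Scope ring_scope.

(* S(delta_{x_1} (x) ... (x) delta_{x_N}) is invariant under permuting the
   x_k, so it only depends on the multiset {x_1, ..., x_N}, i.e. on the
   empirical measure 1/N sum_k delta_{x_k}; psi_N(lambda) is S applied to the
   sorted sequence with that multiset. Hence form (i) equals form (ii) with
   lambda^(nu) the empirical measures of the T_k(a_nu). Conversely, every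
   lambda in P_{1/N}(X) is the empirical measure of a sequence of length N
   (its sorted sequence), which provides the maps T_k. *)

Lemma map_enum_eqE (T : finType) (U : eqType) (f g : T -> U) :
  (map f (enum T) == map g (enum T)) = [forall k, f k == g k].
Proof.
apply/eqP/forallP => [/eq_in_map eq_fg k | eq_fg].
  by apply/eqP/eq_fg; rewrite mem_enum.
by apply/eq_in_map => k _; apply/eqP.
Qed.

Lemma count_mem_map_enum (T : finType) (U : eqType) (f : T -> U) (u : U) :
  count_mem u (map f (enum T)) = #|[set x | f x == u]|.
Proof. by rewrite count_map enumT cardsE cardE /enum_mem size_filter. Qed.

Lemma sum_count_mem (T : finType) (s : seq T) :
  (\sum_(x : T) count_mem x s)%N = size s.
Proof.
elim: s => [|y s IHs] /=; first by rewrite big1.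
rewrite big_split /= IHs (bigD1 y) //= eqxx big1 // => x.
by rewrite eq_sym => /negbTE ->.
Qed.

Section Symmetrization.

Variables (R : realType) (N l : nat).

Lemma symm_dirac_perm (s t : seq 'I_l) (y : config N l) :
  size s = N -> perm_eq s t ->
  symm (R:=R) (dirac_seq s) y = symm (dirac_seq t) y.
Proof.
move=> size_s; rewrite perm_sym.
have tuple_s : size s == N by apply/eqP.
case/(tuple_permP (t:=Tuple tuple_s)) => p ->.
rewrite /symm; congr (_ * _).
rewrite (reindex_inj (mulgI p^-1%g)); apply: eq_bigr => sigma _.
rewrite /dirac_seq -{1}[s]/(tval (Tuple tuple_s)) -map_tnth_enum.
rewrite -[[tuple _ | i < N] : seq _]/(map _ (ord_tuple N)) val_ord_tuple.
rewrite !map_enum_eqE; congr (nat_of_bool _)%:R.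
apply/idP/idP => /forallP eq_y; apply/forallP => k; rewrite ffunE.
  by have := eq_y (p k); rewrite ffunE permM permK.
by have := eq_y (p^-1%g k); rewrite ffunE permM permKV.
Qed.

Lemma count_psi_seq (lam : 'I_l -> R) (i : 'I_l) :
  count_mem i (psi_seq N lam) = Num.truncn (N%:R * lam i).
Proof.
rewrite /psi_seq count_flatten -map_comp sumnE big_map.
rewrite (bigD1_seq i) ?mem_enum ?enum_uniq //= count_nseq /= eqxx mul1n.
rewrite big1_seq ?addn0 // => j /andP[/negbTE j_neq_i _].
by rewrite count_nseq /= j_neq_i.
Qed.

Hypothesis N_gt0 : (0 < N)%N.

Let N_neq0 : (N%:R : R) != 0.
Proof. by rewrite pnatr_eq0 -lt0n. Qed.

Lemma perm_psi_seq_empirical (T : 'I_N -> 'I_l -> 'I_l) (nu : 'I_l) :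
  perm_eq (psi_seq N (empirical (R:=R) T nu)) [seq T k nu | k <- enum 'I_N].
Proof.
apply/allP => i _; apply/eqP.
by rewrite count_psi_seq count_mem_map_enum /empirical mulrA mulfV ?mul1r ?natrK.
Qed.

Lemma psiN_empirical (T : 'I_N -> 'I_l -> 'I_l) (nu : 'I_l) :
  psiN (N:=N) (empirical (R:=R) T nu)
  =1 symm (dirac_seq [seq T k nu | k <- enum 'I_N]).
Proof.
move=> y; apply: symm_dirac_perm; last exact: perm_psi_seq_empirical.
by rewrite (perm_size (perm_psi_seq_empirical T nu)) size_map size_enum_ord.
Qed.

Lemma empirical_in_P1N (T : 'I_N -> 'I_l -> 'I_l) (nu : 'I_l) :
  in_P1N N (empirical (R:=R) T nu).
Proof.
split; [split|].
- by move=> i; rewrite /empirical mulr_ge0 ?invr_ge0 ?ler0n.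
- under eq_bigr do rewrite /empirical -count_mem_map_enum.
  by rewrite -mulr_sumr -natr_sum sum_count_mem size_map size_enum_ord mulVf.
- by move=> i; exists #|[set k | T k nu == i]|; rewrite mulrC.
Qed.

Lemma formII_formI (lams : 'I_l -> 'I_l -> R) (alpha : 'I_l -> R)
    (T : 'I_N -> 'I_l -> 'I_l) :
  (forall nu, lams nu =1 empirical T nu) -> formII lams alpha =1 formI T alpha.
Proof.
move=> lamsT y; apply: eq_bigr => nu _; congr (_ * _).
rewrite -psiN_empirical /psiN /psi_seq.
by under eq_map do rewrite lamsT.
Qed.

Lemma natr_truncn_P1N (lam : 'I_l -> R) : in_P1N N lam ->
  forall i, (Num.truncn (N%:R * lam i))%:R = N%:R * lam i.
Proof.
by move=> [_ lam_grid] i; have [m ->] := lam_grid i; rewrite mulrC divfK ?natrK.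
Qed.

Lemma size_psi_seq (lam : 'I_l -> R) : in_P1N N lam -> size (psi_seq N lam) = N.
Proof.
move=> lamP; apply/eqP; rewrite -(eqr_nat R) -sum_count_mem natr_sum.
under eq_bigr do rewrite count_psi_seq (natr_truncn_P1N lamP).
by rewrite -mulr_sumr (proj2 (proj1 lamP)) mulr1.
Qed.

Lemma in_P1N_empirical_seq (lam : 'I_l -> R) : in_P1N N lam ->
  exists t : 'I_N -> 'I_l, forall i, lam i = N%:R^-1 * #|[set k | t k == i]|%:R.
Proof.
move=> lamP; have /eqP size_psi := size_psi_seq lamP.
exists (tnth (Tuple size_psi)) => i.
rewrite -count_mem_map_enum map_tnth_enum /= count_psi_seq (natr_truncn_P1N lamP).
by rewrite mulKf.
Qed.

Lemma in_P1N_empirical (lams : 'I_l -> 'I_l -> R) :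
  (forall nu, in_P1N N (lams nu)) ->
  exists T : 'I_N -> 'I_l -> 'I_l, forall nu, lams nu =1 empirical T nu.
Proof.
move=> lamsP.
have [t lams_t] := fin_all_exists (fun nu => in_P1N_empirical_seq (lamsP nu)).
by exists (fun k nu => t nu k).
Qed.

End Symmetrization.

Lemma eq_mass_constraint (R : realType) (l : nat) (lams lams' : 'I_l -> 'I_l -> R)
    (alpha lamstar : 'I_l -> R) :
  (forall nu, lams nu =1 lams' nu) ->
  mass_constraint lams alpha lamstar -> mass_constraint lams' alpha lamstar.
Proof.
move=> eq_lams [alpha_ge0 sum_lams]; split=> // i.
by rewrite -sum_lams; apply: eq_bigr => nu _; rewrite eq_lams.
Qed.

Theorem proposition5p2 (R : realType) (l N : nat) (lamstar : 'I_l -> R)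
  (gamma : config N l -> R) :
  (2 <= N)%N -> is_prob lamstar -> is_prob gamma ->
  (* (i) <-> (ii) *)
  ((exists (T : 'I_N -> 'I_l -> 'I_l) (alpha : 'I_l -> R),
      mass_constraint (empirical T) alpha lamstar /\ gamma =1 formI T alpha)
   <->
   (exists (lams : 'I_l -> 'I_l -> R) (alpha : 'I_l -> R),
      (forall nu, in_P1N N (lams nu)) /\
      mass_constraint lams alpha lamstar /\ gamma =1 formII lams alpha))
  /\
  (* form (i) gives form (ii) with the same lambda^(nu), alpha^(nu) *)
  (forall (T : 'I_N -> 'I_l -> 'I_l) (alpha : 'I_l -> R),
      mass_constraint (empirical T) alpha lamstar -> gamma =1 formI T alpha ->
      (forall nu, in_P1N N (empirical (R:=R) T nu)) /\
      gamma =1 formII (empirical T) alpha)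
  /\
  (* form (ii) gives form (i) for any T realizing the lambda^(nu) *)
  (forall (lams : 'I_l -> 'I_l -> R) (alpha : 'I_l -> R),
      (forall nu, in_P1N N (lams nu)) ->
      mass_constraint lams alpha lamstar -> gamma =1 formII lams alpha ->
      forall T : 'I_N -> 'I_l -> 'I_l,
        (forall nu, lams nu =1 empirical T nu) ->
        gamma =1 formI T alpha).
Proof.
move=> N_ge2 _ _; have N_gt0 : (0 < N)%N by apply: leq_trans N_ge2.
have I_to_II T alpha : gamma =1 formI T alpha ->
    (forall nu, in_P1N N (empirical (R:=R) T nu)) /\
    gamma =1 formII (empirical T) alpha.
  move=> gammaI; split=> [nu|y]; first exact: empirical_in_P1N.
  by rewrite gammaI (formII_formI N_gt0 alpha (fun nu => frefl _)).
have II_to_I lams alpha T : gamma =1 formII lams alpha ->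
    (forall nu, lams nu =1 empirical T nu) -> gamma =1 formI T alpha.
  by move=> gammaII lamsT y; rewrite gammaII (formII_formI N_gt0 alpha lamsT).
split; last by split=> [T alpha _ /I_to_II | lams alpha _ _ /II_to_I].
split=> [[T [alpha [massT /I_to_II[lamsP gammaII]]]] |
         [lams [alpha [lamsP [mass gammaII]]]]].
  by exists (empirical T), alpha.
have [T lamsT] := in_P1N_empirical N_gt0 lamsP.
exists T, alpha; split; first exact: eq_mass_constraint mass.
exact: II_to_I lamsT.
Qed.
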